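(* For every graph $G$ and every positive integer $n \ge 2$, \[ \chi_n(G)\le\begin{cases}\left\lceil \dfrac{\tau(G)-n}{\lceil (2n+2)/3\rceil}\right\rceil+1 & \text{if } 2\le n\le \tau(G),\\ 1 & \text{if } n>\tau(G).\end{cases} \]
   Context: All graphs are finite and simple. The order of a path is its number of vertices, and $\tau(G)$ is the order of a longest path in $G$. For a positive integer $n$, an $n$-detour colouring of $G$ is a colouring of the vertices of $G$ such that no path of order greater than $n$ in $G$ has all its vertices of the same colour (equivalently, each colour class induces a subgraph with no path of order greater than $n$). The $n$th detour chromatic number $\chi_n(G)$ is the minimum number of colours in an $n$-detour colouring of $G$. *)

From mathcomp Require Import all_boot.
Set Implicit Arguments. Unset Strict Implicit. Unset Printing Implicit Defensive.

Definition simple_graph (T : finType) (e : rel T) : Prop :=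
  symmetric e /\ irreflexive e.

(* A path in G is a nonempty sequence of distinct vertices, consecutive ones adjacent.
   Its order is its number of vertices (= size). *)
Definition is_gpath (T : finType) (e : rel T) (s : seq T) : bool :=
  match s with
  | [::] => false
  | x :: s' => path e x s' && uniq s
  end.

Lemma gpath_size_le (T : finType) (e : rel T) (s : seq T) :
  is_gpath e s -> size s <= #|T|.
Proof.
case: s => [//|x s] /andP[_ u].
by rewrite -(card_uniqP u) max_card.
Qed.

(* "there is a path of order k" (order 0 counted trivially so the set is nonempty) *)
Definition has_path_of_order (T : finType) (e : rel T) (k : nat) : bool :=
  (k == 0) || [exists s : k.-tuple T, is_gpath e s].

Lemma has_path_of_order_ex (T : finType) (e : rel T) :
  exists k, has_path_of_order e k.
Proof. by exists 0. Qed.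

Lemma has_path_of_order_bound (T : finType) (e : rel T) :
  forall k, has_path_of_order e k -> k <= #|T|.
Proof.
move=> k /orP[/eqP -> //|/existsP[s /gpath_size_le]].
by rewrite size_tuple.
Qed.

(* tau(G): the order of a longest path in G (0 for the empty graph). *)
Definition tau (T : finType) (e : rel T) : nat :=
  ex_maxn (has_path_of_order_ex e) (@has_path_of_order_bound T e).

Definition detour_colouring (T : finType) (e : rel T) (n k : nat) (f : T -> 'I_k) : Prop :=
  forall s : seq T, is_gpath e s -> n < size s ->
    ~ (forall x y, x \in s -> y \in s -> f x = f y).

Definition has_detour_colouring (T : finType) (e : rel T) (n k : nat) : Prop :=
  exists f : T -> 'I_k, detour_colouring e n f.

(* chi_n(G) <= k  iff  G has an n-detour colouring using (at most) k colours,
   i.e. a map into a k-element colour set (colours may be unused). *)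
Definition chi_n_le (T : finType) (e : rel T) (n k : nat) : Prop :=
  has_detour_colouring e n k.

(* The bound of the theorem: ceil(a/b) for b>0 is (a + b - 1) %/ b. *)
Definition ceil_div (a b : nat) : nat := (a + b.-1) %/ b.

Definition detour_bound (t n : nat) : nat :=
  if n <= t then ceil_div (t - n) (ceil_div (2 * n + 2) 3) + 1 else 1.

From mathcomp Require Import all_boot zify.
Set Implicit Arguments. Unset Strict Implicit. Unset Printing Implicit Defensive.

(* Colour greedily: take a maximal set A of vertices spanning no path of order
   > n, give it one colour and recurse on the rest.  By maximality every vertex
   outside A lies on a path of order > n whose other vertices are in A.  For a
   path P outside A, such paths through the two ends of P give two pairs of arms
   inside A.  Gluing P to the arms in the various possible ways, the resulting
   paths cannot all be shorter than |P| + c when 3c <= 2n + 4, i.e. for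
   c = ceil((2n+2)/3).  So removing A lowers the order of a longest path by c. *)

(* What gluing yields, in terms of the lengths [a1], [a2] of the arms at the
   start of P and the length [g] of an arm at its end: that arm either avoids
   the arms at the start ([None]) or first meets the [i]-th vertex of the first
   ([Some (true, i)]) or of the second ([Some (false, i)]) of them; in the
   latter case one continues along the hit arm in either direction. *)
Definition hit_bound (c a b i : nat) : Prop := a + (b - i) < c /\ a + i.+1 < c.

Definition arm_bound (c a1 a2 g : nat) (h : option (bool * nat)) : Prop :=
  match h with
  | None => a1 + g < c /\ a2 + g < c
  | Some (false, i) => hit_bound c a1 a2 i
  | Some (true, i) => hit_bound c a2 a1 i
  end.

Lemma arm_bounds_collide n c a1 a2 g1 g2 h1 h2 :
  2 <= n -> 3 * c <= 2 * n + 4 -> n <= a1 + a2 -> n <= g1 + g2 ->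
  a1 < c -> a2 < c -> g1 < c -> g2 < c ->
  arm_bound c a1 a2 g1 h1 -> arm_bound c a1 a2 g2 h2 ->
  exists h, h1 = Some h /\ h2 = Some h.
Proof.
move=> n_ge2 c_le a_ge g_ge a1_lt a2_lt g1_lt g2_lt.
case: h1 h2 => [[[] i1]|] [[[] i2]|]; rewrite /= /hit_bound => B1 B2.
all: try (have [<-|i1_neq] := eqVneq i1 i2; first by eexists).
all: exfalso; lia.
Qed.

Lemma ceil_div_bounds a b : 0 < b -> a <= ceil_div a b * b < a + b.
Proof.
move=> b_gt0; rewrite /ceil_div.
have := divn_eq (a + b.-1) b; have := ltn_pmod (a + b.-1) b_gt0; lia.
Qed.

Section DetourColouring.

Variables (T : finType) (e : rel T).
Hypothesis e_sym : symmetric e.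

Lemma gpathE s : is_gpath e s = [&& s != [::], sorted e s & uniq s].
Proof. by case: s. Qed.

Lemma sorted_rev s : sorted e (rev s) = sorted e s.
Proof. by rewrite rev_sorted; case: s => //= x s; apply: eq_path => y z. Qed.

Lemma uniq_rev_cat (s1 s2 : seq T) : uniq (rev s1 ++ s2) = uniq (s1 ++ s2).
Proof. by apply: perm_uniq; rewrite perm_cat2r perm_rev. Qed.

Definition longest_path_le (U : {set T}) (k : nat) : Prop :=
  forall s, is_gpath e s -> {subset s <= U} -> size s <= k.

(* Decidable, since a path of order > k has a prefix of order k + 1. *)
Definition longest_path_leb (U : {set T}) (k : nat) : bool :=
  [forall s : k.+1.-tuple T, ~~ (is_gpath e s && all (mem U) s)].

Lemma longest_path_leP U k : reflect (longest_path_le U k) (longest_path_leb U k).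
Proof.
apply: (iffP forallP) => [no_long s s_gpath sU | U_le s].
- rewrite leqNgt; apply/negP => s_long.
  have size_pre : size (take k.+1 s) == k.+1 by rewrite size_takel.
  have pre_gpath : is_gpath e (take k.+1 s).
    move: s_gpath; rewrite !gpathE -!size_eq0 (eqP size_pre).
    by case/and3P=> _ /take_sorted -> /take_uniq ->.
  move/negP: (no_long (Tuple size_pre)); apply; rewrite /= pre_gpath.
  by apply/allP => x /mem_take /sU.
- apply/negP => /andP[s_gpath /allP sU].
  by have := U_le s s_gpath sU; rewrite size_tuple ltnn.
Qed.

Lemma exists_maximal_longest_path_le k (U : {set T}) :
  exists2 A : {set T}, A \subset U & longest_path_le A k /\
    forall u, u \in U :\: A ->
      exists s, [/\ is_gpath e s, {subset s <= u |: A} & k < size s].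
Proof.
pose P := [pred B : {set T} | (B \subset U) && longest_path_leb B k].
have P0 : P set0.
  rewrite /= sub0set; apply/longest_path_leP => -[//|x s] _ /(_ x (mem_head _ _)).
  by rewrite inE.
have [A /maxsetP[/andP[AU /longest_path_leP A_le] A_max] _] := maxset_exists P0.
exists A => //; split => // u; rewrite inE => /andP[uA uU].
have : ~~ longest_path_leb (u |: A) k.
  apply: contra uA => uA_le.
  by rewrite -(A_max (u |: A)) ?setU11 ?subsetUr //= subUset sub1set uU AU.
by case/forallPn => s /negPn /andP[s_gpath /allP sA]; exists s; rewrite ?size_tuple.
Qed.

(* The path [rev L ++ v :: M] through [v], with all its other vertices in [A]. *)
Definition arms_at (A : {set T}) (v : T) (L M : seq T) : Prop :=
  [/\ path e v L, path e v M, uniq (L ++ M) & {subset L ++ M <= A}].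

Lemma arms_atC A v L M : arms_at A v L M -> arms_at A v M L.
Proof.
case=> pL pM uLM sLM; split; rewrite 1?uniq_catC //.
by move=> x; rewrite mem_cat orbC -mem_cat => /sLM.
Qed.

Lemma arms_at_left A v L M : arms_at A v L M -> [/\ path e v L, uniq L & {subset L <= A}].
Proof.
case=> pL _ uLM sLM; split=> //; first by move: uLM; rewrite cat_uniq => /and3P[].
by move=> x xL; apply: sLM; rewrite mem_cat xL.
Qed.

Lemma gpath_arms A v s : is_gpath e s -> {subset s <= v |: A} -> v \in s ->
  exists L M, arms_at A v L M /\ size s = (size L + size M).+1.
Proof.
move=> + + vs; case/splitPr: vs => L' M.
rewrite gpathE sorted_cat_cons => /and3P[_ /andP[sL pM] u] sA.
exists (rev L'), M; split; last by rewrite size_cat size_rev addnS.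
have vLM : v \notin L' ++ M.
  by move: u; rewrite -cat1s uniq_catCA cat1s cons_uniq => /andP[].
split => //.
- by move: sL; rewrite -sorted_rev rev_rcons.
- rewrite uniq_rev_cat; apply: subseq_uniq u.
  by rewrite subseq_cat2l -cat1s suffix_subseq.
- move=> x; rewrite mem_cat mem_rev -mem_cat => xLM.
  have : x \in L' ++ v :: M.
    by move: xLM; rewrite !mem_cat inE => /orP[] ->; rewrite ?orbT.
  by move/sA; rewrite !inE; case: eqP => // x_v; rewrite -x_v xLM in vLM.
Qed.

Section Extension.

Variables (A U : {set T}) (v : T) (p : seq T) (c : nat).
Hypotheses (vp_gpath : is_gpath e (v :: p)) (vp_out : {subset v :: p <= U :\: A}).
Hypothesis AU : A \subset U.
Hypothesis vp_longest :
  forall s, is_gpath e s -> {subset s <= U} -> size s < size (v :: p) + c.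

Lemma extension_short X Z : path e v X -> path e (last v p) Z ->
  uniq (X ++ Z) -> {subset X ++ Z <= A} -> size X + size Z < c.
Proof.
move=> pX pZ uXZ sXZ.
have s_rXZ : {subset rev X ++ Z <= A} by move=> x; rewrite mem_cat mem_rev -mem_cat => /sXZ.
have XZ_out : ~~ has (mem (rev X ++ Z)) (v :: p).
  by apply/hasPn => x /vp_out; rewrite inE => /andP[xA _]; apply: contra xA => /s_rXZ.
have Q_gpath : is_gpath e (rev X ++ v :: p ++ Z).
  case/andP: vp_gpath => pp up; rewrite gpathE; apply/and3P; split.
  - by case: (rev X).
  - by rewrite sorted_cat_cons -rev_cons sorted_rev /= pX cat_path pp pZ.
  - by rewrite -cat_cons uniq_catCA cat_uniq has_sym XZ_out uniq_rev_cat uXZ up.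
have Q_sub : {subset rev X ++ v :: p ++ Z <= U}.
  move=> x; rewrite -cat_cons !mem_cat => /or3P[xX|x_vp|xZ].
  - by apply/(subsetP AU)/s_rXZ; rewrite mem_cat xX.
  - by move/vp_out: x_vp; rewrite inE => /andP[].
  - by apply/(subsetP AU)/s_rXZ; rewrite mem_cat xZ orbT.
by have := vp_longest Q_gpath Q_sub; rewrite size_cat size_rev /= size_cat; lia.
Qed.

Lemma first_hit_bound L M Y x : arms_at A v L M -> path e (last v p) (rcons Y x) ->
  {subset Y <= A} -> uniq Y -> ~~ has (mem (L ++ M)) Y -> x \in M ->
  hit_bound c (size L) (size M) (index x M).
Proof.
case=> pL pM uLM sLM pYx sY uY Y_miss xM.
case/splitPr: xM pM uLM sLM Y_miss => M1 M2 pM uLM sLM Y_miss.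
have uYLM : uniq (Y ++ L ++ M1 ++ x :: M2).
  by rewrite cat_uniq uY uLM has_sym Y_miss.
have x_M1 : x \notin M1.
  by move: uLM; rewrite catA cat_uniq /= mem_cat => /and3P[_ /norP[/norP[_ ->]]].
have sYLM : {subset Y ++ L ++ M1 ++ x :: M2 <= A}.
  by move=> z; rewrite mem_cat => /orP[/sY|/sLM].
rewrite index_cat (negPf x_M1) /= eqxx addn0 size_cat /hit_bound addKn.
move: pM; rewrite -cat_rcons cat_path last_rcons => /andP[pM1 pM2]; split.
- have perm : perm_eq (L ++ Y ++ x :: M2) (Y ++ L ++ x :: M2) by rewrite perm_catCA.
  have sub : subseq (Y ++ L ++ x :: M2) (Y ++ L ++ M1 ++ x :: M2).
    by rewrite !subseq_cat2l suffix_subseq.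
  apply: leq_ltn_trans (extension_short (Z := Y ++ x :: M2) pL _ _ _).
  + by rewrite leq_add2l size_cat leq_addl.
  + by rewrite -cat_rcons cat_path pYx last_rcons.
  + by rewrite (perm_uniq perm) (subseq_uniq sub uYLM).
  + by move=> z; rewrite (perm_mem perm) => /(mem_subseq sub) /sYLM.
- have pM1r : path e x (rev M1).
    move: pM1; rewrite -[path _ _ _]/(sorted e (v :: rcons M1 x)) -sorted_rev.
    by rewrite rev_cons rev_rcons /= rcons_path => /andP[].
  have perm : perm_eq (L ++ Y ++ x :: rev M1) (Y ++ L ++ rcons M1 x).
    by rewrite perm_catCA !perm_cat2l -rev_rcons perm_rev.
  have sub : subseq (Y ++ L ++ rcons M1 x) (Y ++ L ++ M1 ++ x :: M2).
    by rewrite !subseq_cat2l -cat_rcons prefix_subseq.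
  apply: leq_ltn_trans (extension_short (Z := Y ++ x :: rev M1) pL _ _ _).
  + by rewrite leq_add2l size_cat /= size_rev leq_addl.
  + by rewrite -cat_rcons cat_path pYx last_rcons pM1r.
  + by rewrite (perm_uniq perm) (subseq_uniq sub uYLM).
  + by move=> z; rewrite (perm_mem perm) => /(mem_subseq sub) /sYLM.
Qed.

Lemma arm_short X : path e v X -> uniq X -> {subset X <= A} -> size X < c.
Proof.
move=> pX uX sX; rewrite -[size X]addn0.
by apply: (extension_short (Z := [::])); rewrite ?cats0.
Qed.

Lemma end_arm_short Z : path e (last v p) Z -> uniq Z -> {subset Z <= A} -> size Z < c.
Proof. by move=> pZ uZ sZ; apply: (extension_short (X := [::])). Qed.

Lemma arm_meets L M Y : arms_at A v L M -> path e (last v p) Y ->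
  {subset Y <= A} -> uniq Y ->
  exists h, arm_bound c (size L) (size M) (size Y) h /\
    forall b i, h = Some (b, i) -> nth v (if b then L else M) i \in Y.
Proof.
move=> arms pY sY uY; have [hit|miss] := boolP (has (mem (L ++ M)) Y); last first.
  have miss_short X : [/\ path e v X, uniq X & {subset X <= A}] ->
      {subset X <= L ++ M} -> size X + size Y < c.
    case=> pX uX sX X_LM; apply: extension_short pX pY _ _.
      by rewrite cat_uniq uX uY andbT; apply: contra miss; apply: sub_has.
    by move=> z; rewrite mem_cat => /orP[/sX|/sY].
  exists None; split=> //; split; apply: miss_short.
  - exact: arms_at_left arms.
  - by move=> z zL; rewrite mem_cat zL.
  - exact: arms_at_left (arms_atC arms).
  - by move=> z zM; rewrite mem_cat zM orbT.
case/split_find: hit pY sY uY => x Y0 Y1 xLM Y0_miss pY sY uY.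
have pY0x : path e (last v p) (rcons Y0 x) by move: pY; rewrite cat_path => /andP[].
have sY0 : {subset Y0 <= A}.
  by move=> z z_Y0; apply: sY; rewrite mem_cat mem_rcons inE z_Y0 orbT.
have uY0 : uniq Y0 by move: uY; rewrite cat_uniq rcons_uniq => /and3P[/andP[]].
have xY : x \in rcons Y0 x ++ Y1 by rewrite mem_cat mem_rcons mem_head.
move: xLM; rewrite inE mem_cat => /orP[xL|xM].
- exists (Some (true, index x L)); split; last by move=> _ _ [<- <-]; rewrite nth_index.
  apply: first_hit_bound (arms_atC arms) pY0x sY0 uY0 _ xL.
  by apply: contra Y0_miss; apply: sub_has => z; rewrite !inE !mem_cat orbC.
- exists (Some (false, index x M)); split; last by move=> _ _ [<- <-]; rewrite nth_index.
  exact: first_hit_bound arms pY0x sY0 uY0 Y0_miss xM.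
Qed.

Variable n : nat.
Hypotheses (n_ge2 : 2 <= n) (c_le : 3 * c <= 2 * n + 4).
Hypothesis A_le : longest_path_le A n.
Hypothesis A_max : forall u, u \in U :\: A ->
  exists s, [/\ is_gpath e s, {subset s <= u |: A} & n < size s].

Lemma short_extension_absurd : False.
Proof.
have arms_through u : u \in v :: p ->
    exists L M, arms_at A u L M /\ n <= size L + size M.
  move=> u_vp; have [s [s_gpath sA s_long]] := A_max (vp_out u_vp).
  have u_s : u \in s.
    apply: contraLR s_long => u_s; rewrite -leqNgt; apply: A_le _ s_gpath _ => z z_s.
    by have := sA z z_s; rewrite !inE; case: eqP => // z_u; rewrite -z_u z_s in u_s.
  have [L [M [arms size_s]]] := gpath_arms s_gpath sA u_s.
  by exists L, M; rewrite -ltnS -size_s.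
have [L [M [R R_long]]] := arms_through v (mem_head _ _).
have [Y1 [Y2 [S S_long]]] := arms_through _ (mem_last v p).
have [pL uL sL] := arms_at_left R; have [pM uM sM] := arms_at_left (arms_atC R).
have [pY1 uY1 sY1] := arms_at_left S; have [pY2 uY2 sY2] := arms_at_left (arms_atC S).
have [h1 [B1 meet1]] := arm_meets R pY1 sY1 uY1.
have [h2 [B2 meet2]] := arm_meets R pY2 sY2 uY2.
have [[b i] [h1_eq h2_eq]] := arm_bounds_collide n_ge2 c_le R_long S_long
  (arm_short pL uL sL) (arm_short pM uM sM)
  (end_arm_short pY1 uY1 sY1) (end_arm_short pY2 uY2 sY2) B1 B2.
case: S => _ _ + _; rewrite cat_uniq => /and3P[_ /hasPn /(_ _ (meet2 b i h2_eq))].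
by rewrite meet1.
Qed.

End Extension.

Lemma longest_path_le_setD n c m (U A : {set T}) :
  2 <= n -> 3 * c <= 2 * n + 4 -> A \subset U -> longest_path_le A n ->
  (forall u, u \in U :\: A ->
     exists s, [/\ is_gpath e s, {subset s <= u |: A} & n < size s]) ->
  longest_path_le U (m + c) -> longest_path_le (U :\: A) m.
Proof.
move=> n_ge2 c_le AU A_le A_max U_le [//|v p] vp_gpath vp_out.
rewrite leqNgt; apply/negP => vp_long.
apply: (short_extension_absurd vp_gpath vp_out AU _ n_ge2 c_le A_le A_max).
by move=> s s_gpath sU; rewrite (leq_ltn_trans (U_le s s_gpath sU)) ?ltn_add2r.
Qed.

Definition detour_colouring_on n (U : {set T}) k (f : T -> 'I_k) : Prop :=
  forall s, is_gpath e s -> {subset s <= U} -> n < size s ->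
    ~ {in s &, forall x y, f x = f y}.

Definition add_colour (A : {set T}) k (g : T -> 'I_k) (x : T) : 'I_k.+1 :=
  if x \in A then ord_max else widen_ord (leqnSn k) (g x).

Lemma add_colour_max A k (g : T -> 'I_k) x : (add_colour A g x == ord_max) = (x \in A).
Proof.
rewrite /add_colour; case: (x \in A); first exact: eqxx.
by apply/negbTE; rewrite -val_eqE /= neq_ltn ltn_ord.
Qed.

Lemma detour_colouring_on_exists n c j (U : {set T}) :
  2 <= n -> 3 * c <= 2 * n + 4 -> longest_path_le U (n + j * c) ->
  exists f : T -> 'I_j.+1, detour_colouring_on n U f.
Proof.
move=> n_ge2 c_le; elim: j U => [|j IH] U U_le.
  exists (fun=> ord0) => s s_gpath sU s_long _.
  by have := U_le s s_gpath sU; rewrite mul0n addn0 leqNgt s_long.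
have [A AU [A_le A_max]] := exists_maximal_longest_path_le n U.
have UA_le : longest_path_le (U :\: A) (n + j * c).
  by apply: longest_path_le_setD n_ge2 c_le AU A_le A_max _; rewrite -addnA -mulSnr.
have [g g_col] := IH _ UA_le.
exists (add_colour A g) => -[//|x s] s_gpath sU s_long mono.
have same_side y : y \in x :: s -> (y \in A) = (x \in A).
  by move=> ys; rewrite -!(add_colour_max A g) (mono y x) ?mem_head.
have [xA|xA] := boolP (x \in A).
  suff : size (x :: s) <= n by rewrite leqNgt s_long.
  by apply: A_le _ s_gpath _ => y ys; rewrite same_side.
apply: (g_col _ s_gpath _ s_long) => [y ys|y z ys zs].
  by rewrite inE (same_side y ys) xA sU.
apply: val_inj; have := congr1 val (mono y z ys zs).
by rewrite /add_colour (same_side y ys) (same_side z zs) (negPf xA).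
Qed.

Lemma longest_path_le_tau : longest_path_le [set: T] (tau e).
Proof.
move=> s s_gpath _; rewrite /tau; case: ex_maxnP => t _; apply.
by apply/orP; right; apply/existsP; exists (in_tuple s).
Qed.

End DetourColouring.

Unset Implicit Arguments.
Set Strict Implicit.

Theorem theorem1p28 (T : finType) (e : rel T) (n : nat) :
  simple_graph e -> 2 <= n ->
  chi_n_le e n (detour_bound (tau e) n).
Proof.
move=> [e_sym _] n_ge2.
set c := ceil_div (2 * n + 2) 3.
have [c_gt0 c_le] : 0 < c /\ 3 * c <= 2 * n + 4.
  by have := ceil_div_bounds (2 * n + 2) (isT : 0 < 3); lia.
have [j -> tau_le] : exists2 j, detour_bound (tau e) n = j.+1 & tau e <= n + j * c.
  rewrite /detour_bound; case: leqP => [_|tau_lt].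
    exists (ceil_div (tau e - n) c); first by rewrite addn1.
    by have := ceil_div_bounds (tau e - n) c_gt0; lia.
  by exists 0; rewrite // mul0n addn0; exact: ltnW.
have [f f_col] := detour_colouring_on_exists e_sym n_ge2 c_le
  (fun s s_gpath sT => leq_trans (longest_path_le_tau s_gpath sT) tau_le).
by exists f => s s_gpath s_long; apply: f_col s_gpath (fun x _ => in_setT x) s_long.
Qed.
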